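(* Let $\varphi$ be an LTL formula in PNF and let $\mathcal{A}(\varphi)=(Q,\Sigma,\delta,\alpha_0,F)$ be the alternating $\omega$-automaton with $Q=\partial^+(\varphi)$, $\delta(\psi,x)=\partial_x(\psi)$ for all $\psi\in Q$ and $x\in\Sigma$, initial states $\alpha_0=\mathrm{simp}(\varphi)$, and $F=\{\mathbf{tt}\}\cup\{\varphi_1\,\mathcal{R}\,\psi_1 \mid \varphi_1\,\mathcal{R}\,\psi_1\in Q\}$. Then $\mathcal{L}(\varphi)=\mathcal{L}(\mathcal{A}(\varphi))$ under the Büchi acceptance condition.
   Context: LTL formulae in PNF: $\varphi,\psi ::= p \mid \neg p \mid \mathbf{tt} \mid \mathbf{ff} \mid \varphi\wedge\psi \mid \varphi\vee\psi \mid \bigcirc\varphi \mid \varphi\,\mathcal{U}\,\psi \mid \varphi\,\mathcal{R}\,\psi$ with the standard semantics over $\sigma\in\Sigma^\omega$ and an interpretation $I:\Sigma\to\mathcal{P}(AP)$; $\mathcal{L}(\varphi)=\{\sigma\mid\sigma\models\varphi\}$. Temporal formula: does not start with $\wedge$ or $\vee$. Monomials $\mu,\nu$: $\mathbf{ff}$ or consistent sets of literals; $x\models\mu$ means every literal of $\mu$ holds under $I(x)$; $\mu\sqcap\nu$ is $\mathbf{ff}$ if either is $\mathbf{ff}$ or $\mu\cup\nu$ is contradictory, else $\mu\cup\nu$. $\varphi\,\dot\wedge\,\psi$ denotes formal conjunction, normalized modulo associativity, commutativity, idempotence ($\mathbf{tt}$ is the empty formal conjunction). $\mathrm{simp}(\varphi\wedge\psi)=\{\varphi'\,\dot\wedge\,\psi'\mid\varphi'\in\mathrm{simp}(\varphi),\psi'\in\mathrm{simp}(\psi)\}$,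 $\mathrm{simp}(\varphi\vee\psi)=\mathrm{simp}(\varphi)\cup\mathrm{simp}(\psi)$, $\mathrm{simp}(\varphi)=\{\varphi\}$ for temporal $\varphi$. Linear factors $\mathrm{LF}$: $\mathrm{LF}(\ell)=\{\langle\{\ell\},\mathbf{tt}\rangle\}$, $\mathrm{LF}(\mathbf{tt})=\{\langle\mathbf{tt},\mathbf{tt}\rangle\}$, $\mathrm{LF}(\mathbf{ff})=\{\}$, $\mathrm{LF}(\varphi\vee\psi)=\mathrm{LF}(\varphi)\cup\mathrm{LF}(\psi)$, $\mathrm{LF}(\varphi\wedge\psi)=\{\langle\mu\sqcap\nu,\varphi'\,\dot\wedge\,\psi'\rangle\mid\langle\mu,\varphi'\rangle\in\mathrm{LF}(\varphi),\langle\nu,\psi'\rangle\in\mathrm{LF}(\psi),\mu\sqcap\nu\neq\mathbf{ff}\}$, $\mathrm{LF}(\bigcirc\varphi)=\{\langle\mathbf{tt},\varphi'\rangle\mid\varphi'\in\mathrm{simp}(\varphi)\}$, $\mathrm{LF}(\varphi\,\mathcal{U}\,\psi)=\mathrm{LF}(\psi)\cup\{\langle\mu,\varphi'\,\dot\wedge\,(\varphi\,\mathcal{U}\,\psi)\rangle\mid\langle\mu,\varphi'\rangle\in\mathrm{LF}(\varphi)\}$, $\mathrm{LF}(\varphi\,\mathcal{R}\,\psi)=\{\langle\mu\sqcap\nu,\varphi'\,\dot\wedge\,\psi'\rangle\mid\langle\mu,\varphi'\rangle\in\mathrm{LF}(\varphi),\langle\nu,\psi'\rangle\in\mathrm{LF}(\psi),\mu\sqcap\nu\neq\mathbf{ff}\}\cup\{\langle\nu,\psi'\,\dot\wedge\,(\varphi\,\mathcal{R}\,\psi)\rangle\mid\langle\nu,\psi'\rangle\in\mathrm{LF}(\psi)\}$.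 Partial derivatives: $\partial_x(\varphi)=\{\varphi'\mid\langle\mu,\varphi'\rangle\in\mathrm{LF}(\varphi),x\models\mu\}$ for temporal $\varphi$; $\partial_x(\mathbf{tt})=\{\mathbf{tt}\}$; $\partial_x(\varphi\,\dot\wedge\,\psi)=\{\varphi'\,\dot\wedge\,\psi'\mid\varphi'\in\partial_x(\varphi),\psi'\in\partial_x(\psi)\}$. Iterated partial derivatives (subformula set): $\partial^+(\ell)=\{\ell\}$, $\partial^+(\mathbf{tt})=\{\mathbf{tt}\}$, $\partial^+(\mathbf{ff})=\{\mathbf{ff}\}$, $\partial^+(\varphi\vee\psi)=\partial^+(\varphi\wedge\psi)=\partial^+(\varphi)\cup\partial^+(\psi)$, $\partial^+(\bigcirc\varphi)=\{\bigcirc\varphi\}\cup\partial^+(\varphi)$, $\partial^+(\varphi\,\mathcal{U}\,\psi)=\{\varphi\,\mathcal{U}\,\psi\}\cup\partial^+(\varphi)\cup\partial^+(\psi)$, $\partial^+(\varphi\,\mathcal{R}\,\psi)=\{\varphi\,\mathcal{R}\,\psi\}\cup\partial^+(\varphi)\cup\partial^+(\psi)$. An alternating $\omega$-automaton $(Q,\Sigma,\delta,\alpha_0,F)$ has finite state set $Q$, initial condition $\alpha_0$ (a set of sets of states, read as a disjunction of conjunctions), transition function $\delta$ returning a set of conjunctions of states (read as a disjunction), and $F\subseteq Q$. A run on $\sigma$ is a layered digraph with nodes in $Q\times\mathbb{N}$ whose level-0 state set is in $\alpha_0$, every node at level $i+1$ has a predecessor at level $i$, and the successor set of each $(q,i)$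 is in $\delta(q,\sigma_i)$; a run is accepting if every infinite path visits $F$ infinitely often, and $\mathcal{L}(\mathcal{A})$ is the set of words with an accepting run. *)

From mathcomp Require Import all_boot.
Set Implicit Arguments.
Unset Strict Implicit.
Unset Printing Implicit Defensive.

Inductive form (AP : Type) : Type :=
| Lit of bool & AP          (* Lit true p = p,  Lit false p = ~ p *)
| TT
| FF
| And of form AP & form AP
| Or of form AP & form AP
| Next of form AP
| Until of form AP & form AP
| Release of form AP & form AP.
Arguments TT {AP}.
Arguments FF {AP}.

(* Prop-valued list membership (no decidable equality needed). *)
Fixpoint In (T : Type) (x : T) (s : seq T) : Prop :=
  match s with [::] => False | y :: s' => y = x \/ In x s' end.

Section LTL.
Variables (AP : eqType) (Sigma : Type) (I : Sigma -> AP -> bool).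

(* Standard semantics: sat sigma i phi  <->  the suffix sigma^i |= phi. *)
Fixpoint sat (sigma : nat -> Sigma) (i : nat) (phi : form AP) : Prop :=
  match phi with
  | Lit b p => I (sigma i) p = b
  | TT => True
  | FF => False
  | And a b => sat sigma i a /\ sat sigma i b
  | Or a b => sat sigma i a \/ sat sigma i b
  | Next a => sat sigma i.+1 a
  | Until a b => exists k, i <= k /\ sat sigma k b /\
                   forall j, i <= j -> j < k -> sat sigma j a
  | Release a b => forall k, i <= k -> sat sigma k b \/
                   exists j, i <= j /\ j < k /\ sat sigma j a
  end.

(* Literals and monomials: None = ff, Some s = the set (list) s of literals. *)
Definition lit := (bool * AP)%type.
Definition mono := option (seq lit).
Definition consistent (s : seq lit) : bool :=
  ~~ has (fun l : lit => (~~ l.1, l.2) \in s) s.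
Definition mmeet (m n : mono) : mono :=
  match m, n with
  | Some a, Some b => if consistent (a ++ b) then Some (a ++ b) else None
  | _, _ => None
  end.
Definition msat (x : Sigma) (m : mono) : bool :=
  match m with
  | Some a => all (fun l : lit => I x l.2 == l.1) a
  | None => false
  end.

(* Formal conjunctions: lists of temporal formulas read as finite sets
   (modulo AC and idempotence); tt is the empty formal conjunction. *)
Definition fconj := seq (form AP).
Definition fand (c d : fconj) : fconj := c ++ d.
Definition conj1 (f : form AP) : fconj :=
  match f with TT => [::] | _ => [:: f] end.

Fixpoint simp (phi : form AP) : seq fconj :=
  match phi with
  | And a b => flatten [seq [seq fand c d | d <- simp b] | c <- simp a]
  | Or a b => simp a ++ simp b
  | f => [:: conj1 f]
  end.

Definition lfprod (A B : seq (mono * fconj)) : seq (mono * fconj) :=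
  flatten [seq [seq (mmeet m.1 n.1, fand m.2 n.2)
               | n <- B & mmeet m.1 n.1 != None] | m <- A].

Fixpoint LF (phi : form AP) : seq (mono * fconj) :=
  match phi with
  | Lit b p => [:: (Some [:: (b, p)], [::])]
  | TT => [:: (Some [::], [::])]
  | FF => [::]
  | Or a b => LF a ++ LF b
  | And a b => lfprod (LF a) (LF b)
  | Next a => [seq (Some [::], c) | c <- simp a]
  | Until a b => LF b ++ [seq (m.1, fand m.2 (conj1 (Until a b))) | m <- LF a]
  | Release a b => lfprod (LF a) (LF b) ++
                   [seq (n.1, fand n.2 (conj1 (Release a b))) | n <- LF b]
  end.

Definition pderiv (x : Sigma) (phi : form AP) : seq fconj :=
  [seq m.2 | m <- LF phi & msat x m.1].

(* Iterated partial derivatives (subformula set). *)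
Fixpoint dplus (phi : form AP) : seq (form AP) :=
  match phi with
  | Lit b p => [:: Lit b p]
  | TT => [:: TT]
  | FF => [:: FF]
  | And a b => dplus a ++ dplus b
  | Or a b => dplus a ++ dplus b
  | Next a => Next a :: dplus a
  | Until a b => Until a b :: dplus a ++ dplus b
  | Release a b => Release a b :: dplus a ++ dplus b
  end.

End LTL.

(* Sets of states are predicates S -> Prop;
   the state set is a finite list.  trans q x S  means that the conjunction S
   is one of the disjuncts of delta(q,x); init S means S is in alpha_0. *)
Record aut (S Sig : Type) := Aut {
  states : seq S;
  trans : S -> Sig -> (S -> Prop) -> Prop;
  init : (S -> Prop) -> Prop;
  final : S -> Prop }.

Section Runs.
Variables (S Sig : Type) (A : aut S Sig) (sigma : nat -> Sig).

(* A run: node set L i (states at level i) and edges E i q q' from (q,i) to (q',i+1). *)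
Record is_run (L : nat -> S -> Prop) (E : nat -> S -> S -> Prop) : Prop := {
  run_states : forall i q, L i q -> In q (states A);
  run_init : init A (L 0);
  run_pred : forall i q', L i.+1 q' -> exists q, L i q /\ E i q q';
  run_edge : forall i q q', E i q q' -> L i q /\ L i.+1 q';
  run_trans : forall i q, L i q -> trans A q (sigma i) (E i q) }.

Definition buchi_accepting (E : nat -> S -> S -> Prop) : Prop :=
  forall (i0 : nat) (p : nat -> S),
    (forall k, E (i0 + k) (p k) (p k.+1)) ->
    forall n, exists k, n <= k /\ final A (p k).

Definition accepts : Prop :=
  exists L E, is_run L E /\ buchi_accepting E.
End Runs.

Definition set_of (S : Type) (c : seq S) (X : S -> Prop) : Prop :=
  forall q, X q <-> In q c.

Definition autLTL (AP : eqType) (Sigma : Type) (I : Sigma -> AP -> bool)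
  (phi : form AP) : aut (form AP) Sigma :=
  {| states := dplus phi;
     trans := fun q x X => exists c, In c (pderiv I x q) /\ set_of c X;
     init := fun X => exists c, In c (simp phi) /\ set_of c X;
     final := fun q => q = TT \/
        exists a b, q = Release a b /\ In (Release a b) (dplus phi) |}.

From mathcomp Require Import all_boot zify.
From Stdlib Require Import Classical ClassicalEpsilon.

Set Implicit Arguments.
Unset Strict Implicit.
Unset Printing Implicit Defensive.

(* Both directions rest on the expansion law: q holds at i iff some linear factor
   (m, c) of q has sigma_i |= m and all conjuncts of c hold at i+1.
   Soundness: every node (q, i) of an accepting run satisfies q, by induction on q.
   The conjuncts of the factor chosen at (q, i) are smaller than q, except for the
   self-loop of an Until or a Release.  Release is then handled coinductively, and an
   Until whose goal is never reached would yield a path that stays forever in the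
   non-final state a U b.
   Completeness: along a model, every true state picks a true linear factor.  The
   size of formulas never increases along a path and only Until/Release states can
   repeat, so every path is eventually constant.  It cannot stay in an Until state,
   because an Until is fulfilled through the factors of its right argument as soon as
   that argument holds; so it stays in a final Release state. *)

Section InSeq.
Variables T U : Type.

Lemma In_cat (x : T) s t : In x (s ++ t) <-> In x s \/ In x t.
Proof. by elim: s => [|y s IH] /=; tauto. Qed.

Lemma In_map (f : T -> U) y s : In y (map f s) <-> exists x, In x s /\ f x = y.
Proof.
elim: s => [|z s IH] /=; first by split=> // [[x []]].
rewrite IH; split.
- by case=> [<-|[x [? ?]]]; [exists z | exists x]; tauto.
- by case=> x [[<-|?] ?]; [left | right; exists x].
Qed.

Lemma In_filter (p : pred T) x s : In x (filter p s) <-> In x s /\ p x.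
Proof.
elim: s => [|z s IH] /=; first tauto.
case pz: (p z) => /=; rewrite IH; last by split; [tauto | case=> [[<-|]]; rewrite ?pz].
by split; [case=> [<-|] | case=> [[<-|]]]; tauto.
Qed.

Lemma In_flatten x (ss : seq (seq T)) :
  In x (flatten ss) <-> exists s, In s ss /\ In x s.
Proof.
elim: ss => [|s ss IH] /=; first by split=> // [[? []]].
rewrite In_cat IH; split.
- by case=> [?|[t [? ?]]]; [exists s | exists t]; tauto.
- by case=> t [[<-|?] ?]; [left | right; exists t].
Qed.
End InSeq.

Lemma In_allpairs (T U : Type) (f : T -> T -> U) z s t :
  In z (flatten [seq [seq f x y | y <- t] | x <- s]) <->
  exists x y, In x s /\ In y t /\ f x y = z.
Proof.
rewrite In_flatten; split.
- by case=> _ [/In_map [x [? <-]] /In_map [y [? ?]]]; exists x, y.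
- case=> x [y [? [? ?]]]; exists [seq f x y | y <- t].
  by split; apply/In_map; [exists x | exists y].
Qed.

Section Semantics.
Variables (AP : eqType) (Sigma : Type) (I : Sigma -> AP -> bool).
Variable sigma : nat -> Sigma.
Notation sat := (sat I sigma).

Definition satc i (c : fconj AP) := forall f, In f c -> sat i f.

Lemma satc_cat i c d : satc i (c ++ d) <-> satc i c /\ satc i d.
Proof.
split => [H | [Hc Hd] f /In_cat [] ?]; [| exact: Hc | exact: Hd].
by split=> f Hf; apply: H; apply/In_cat; tauto.
Qed.

Lemma satc_conj1 i f : satc i (conj1 f) <-> sat i f.
Proof.
have satc1 g : satc i [:: g] <-> sat i g.
  by split=> [H | H h [<- | []]] //; apply: H; left.
by case: f => *; rewrite ?satc1 //; split=> // _ f [].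
Qed.

Lemma sat_untilE i a b :
  sat i (Until a b) <-> sat i b \/ sat i a /\ sat i.+1 (Until a b).
Proof.
split => /=.
- case=> k [ik [bk ak]]; case: (ltnP i k) => [ik' | ki].
  + right; split; first exact: ak.
    by exists k; do 2!split => //; move=> j ? ?; apply: ak; lia.
  + by left; have <- : k = i by lia.
- case=> [bi | [ai [k [ik [bk ak]]]]]; first by exists i; do 2!split => //; lia.
  exists k; split; [lia | split => // j ij jk].
  by case: (ltnP i j) => [? | ?]; [apply: ak | have -> : j = i by lia].
Qed.

Lemma sat_releaseE i a b :
  sat i (Release a b) <-> sat i b /\ (sat i a \/ sat i.+1 (Release a b)).
Proof.
split => /=.
- move=> R; split; first by case: (R i (leqnn i)) => // [[j]]; lia.
  case: (classic (sat i a)) => [| nai]; [by left | right].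
  move=> k ik; case: (R k (ltnW ik)) => [| [j [ij [jk aj]]]]; first by left.
  right; exists j; split; last by split.
  by case: (ltnP i j) => // ji; exfalso; apply: nai; have <- : j = i by lia.
- case=> bi next k ik.
  case: (ltnP i k) => [ik' | ki]; last by left; have -> : k = i by lia.
  case: next => [ai | R]; first by right; exists i.
  case: (R k ik') => [| [j [? [? ?]]]]; first by left.
  by right; exists j; split; [lia | split].
Qed.

Lemma until_or_forever (P : nat -> Prop) a b i :
  (forall j, P j -> ~ sat j b -> sat j a /\ P j.+1) -> P i ->
  sat i (Until a b) \/ forall k, P (i + k) /\ ~ sat (i + k) b.
Proof.
move=> step Pi; case: (classic (sat i (Until a b))) => [| notU]; [by left | right].
have notb k : (forall j, i <= j -> j < i + k -> sat j a) -> ~ sat (i + k) b.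
  by move=> ak bk; apply: notU; exists (i + k); split; [lia | split].
suff chain k : P (i + k) /\ forall j, i <= j -> j < i + k -> sat j a.
  by move=> k; have [Pk ak] := chain k; split => //; exact: notb.
elim: k => [| k [Pk ak]]; first by rewrite addn0; split => // j; lia.
have [ak' Pk'] := step _ Pk (notb _ ak).
rewrite addnS; split => // j ij jk.
by case: (ltnP j (i + k)) => [| ?]; [apply: ak | have -> : j = i + k by lia].
Qed.

Lemma release_coind (P : nat -> Prop) a b i :
  (forall j, P j -> sat j b /\ (sat j a \/ P j.+1)) -> P i -> sat i (Release a b).
Proof.
move=> step Pi k ik; have -> : k = i + (k - i) by lia.
move: (k - i) => d; elim: d i Pi {ik} => [| d IH] j Pj.
  by rewrite addn0; left; case: (step _ Pj).
case: (step _ Pj) => _ [aj | Pj']; first by right; exists j; split; [| split => //]; lia.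
case: (IH _ Pj') => [bk | [j' [? [? ?]]]]; first by left; rewrite addnS -addSn.
by right; exists j'; split; [| split => //]; lia.
Qed.

Lemma sem_simp i q : sat i q <-> exists c, In c (simp q) /\ satc i c.
Proof.
have simp1 j g : simp g = [:: conj1 g] -> sat j g <-> exists c, In c (simp g) /\ satc j c.
  move=> ->; rewrite -satc_conj1; split => [| [c [[<- | []] //]]].
  by exists (conj1 g); split; first left.
elim: q i => [b p | | | a IHa b IHb | a IHa b IHb | a _ | a _ b _ | a _ b _] i;
  try exact: simp1.
- rewrite /= IHa IHb; split.
  + case=> [[c [? ?]] [d [? ?]]]; exists (fand c d); split; last exact/satc_cat.
    by apply/In_allpairs; exists c, d.
  + case=> _ [/In_allpairs [c [d [? [? <-]]]] /satc_cat [? ?]].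
    by split; [exists c | exists d].
- rewrite /= IHa IHb; split.
  + by case=> [[c [? ?]] | [c [? ?]]]; exists c; rewrite In_cat; tauto.
  + by case=> c [/In_cat [] ? ?]; [left | right]; exists c.
Qed.

Lemma msat_mmeet x m n : msat I x (mmeet m n) = msat I x m && msat I x n.
Proof.
case: m n => [a |] [b |] //=; last by rewrite andbF.
case: ifP => [_ | ]; first by rewrite /= all_cat.
rewrite /consistent => /negbFE/hasP [l l_ab nl_ab].
apply/esym/negbTE/negP => /andP [xa xb].
have /allP x_ab : all (fun l : lit AP => I x l.2 == l.1) (a ++ b).
  by rewrite all_cat xa xb.
by move: (x_ab _ l_ab) (x_ab _ nl_ab) => /= /eqP ->; case: (l.1).
Qed.

Definition LF_holds i (F : seq (mono AP * fconj AP)) :=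
  exists m c, In (m, c) F /\ msat I (sigma i) m /\ satc i.+1 c.

Lemma LF_holds_cat i F G : LF_holds i (F ++ G) <-> LF_holds i F \/ LF_holds i G.
Proof.
split.
- by case=> m [c [/In_cat [] ? ?]]; [left | right]; exists m, c.
- by case=> [[m [c [? ?]]] | [m [c [? ?]]]]; exists m, c; rewrite In_cat; tauto.
Qed.

Lemma In_lfprod (F G : seq (mono AP * fconj AP)) m c :
  In (m, c) (lfprod F G) <-> exists m1 c1 m2 c2, In (m1, c1) F /\ In (m2, c2) G /\
     mmeet m1 m2 != None /\ m = mmeet m1 m2 /\ c = c1 ++ c2.
Proof.
rewrite /lfprod In_flatten; split.
- case=> _ [/In_map [[m1 c1] [? <-]] /In_map [[m2 c2] [/In_filter [? ?] [<- <-]]]].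
  by exists m1, c1, m2, c2.
- case=> m1 [c1 [m2 [c2 [? [? [? [-> ->]]]]]]].
  eexists; split; first by apply/In_map; exists (m1, c1).
  by apply/In_map; exists (m2, c2); split => //; apply/In_filter.
Qed.

Lemma LF_holds_lfprod i F G : LF_holds i (lfprod F G) <-> LF_holds i F /\ LF_holds i G.
Proof.
split.
- case=> m [c [/In_lfprod [m1 [c1 [m2 [c2 [? [? [_ [-> ->]]]]]]]]]].
  rewrite msat_mmeet => [[/andP [? ?] /satc_cat [? ?]]].
  by split; [exists m1, c1 | exists m2, c2].
- case=> [[m1 [c1 [? [x1 ?]]]] [m2 [c2 [? [x2 ?]]]]].
  exists (mmeet m1 m2), (c1 ++ c2); rewrite In_lfprod msat_mmeet x1 x2 satc_cat.
  split; last by [].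
  exists m1, c1, m2, c2; do 3!split => //.
  by apply/eqP => meet0; move: (msat_mmeet (sigma i) m1 m2); rewrite meet0 x1 x2.
Qed.

Lemma LF_holds_extend i F g :
  LF_holds i [seq (mc.1, fand mc.2 (conj1 g)) | mc <- F] <-> LF_holds i F /\ sat i.+1 g.
Proof.
split.
- case=> _ [_ [/In_map [[m c] [? [<- <-]]] [? /satc_cat [? /satc_conj1 ?]]]].
  by split => //; exists m, c.
- case=> [[m [c [? [? ?]]]] ?]; exists m, (c ++ conj1 g).
  by rewrite In_map satc_cat satc_conj1; split => //; exists (m, c).
Qed.

Lemma sem_LF i q : sat i q <-> LF_holds i (LF q).
Proof.
elim: q i => [b p | | | a IHa b IHb | a IHa b IHb | a _ | a IHa b IHb | a IHa b IHb] i.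
- split => [bi | [_ [_ [[[<- _] | []] [/andP [/eqP ? _] _]]]]] //.
  exists (Some [:: (b, p)]), [::]; split; first by left.
  by rewrite /= bi eqxx; split => // f [].
- by split => // _; exists (Some [::]), [::]; split; [left | split => // f []].
- by split => // [[? [? []]]].
- by rewrite LF_holds_lfprod -IHa -IHb.
- by rewrite LF_holds_cat -IHa -IHb.
- rewrite /= (sem_simp i.+1 a); split.
  + by case=> c [? ?]; exists (Some [::]), c; split => //; apply/In_map; exists c.
  + by case=> _ [c [/In_map [d [? [_ <-]]] [_ ?]]]; exists d.
- by rewrite sat_untilE LF_holds_cat LF_holds_extend IHa IHb.
- rewrite sat_releaseE LF_holds_cat LF_holds_extend LF_holds_lfprod IHa IHb.
  tauto.
Qed.
End Semantics.

Section Syntax.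
Variable AP : eqType.

Fixpoint fsize (f : form AP) : nat :=
  match f with
  | And a b | Or a b | Until a b | Release a b => (fsize a + fsize b).+1
  | Next a => (fsize a).+1
  | _ => 0
  end.

Definition isUR (f : form AP) : bool :=
  if f is (Until _ _ | Release _ _) then true else false.

Lemma dplus_size f g : In f (dplus g) -> fsize f <= fsize g.
Proof.
elim: g => [b p | | | a IHa b IHb | a IHa b IHb | a IHa | a IHa b IHb | a IHa b IHb] /=;
  rewrite ?In_cat; try (by case=> [<- | []]).
- by case=> [/IHa | /IHb]; lia.
- by case=> [/IHa | /IHb]; lia.
- by case=> [<- | /IHa] //=; lia.
- by case=> [<- | [/IHa | /IHb]] //=; lia.
- by case=> [<- | [/IHa | /IHb]] //=; lia.
Qed.

Lemma dplus_trans (g h f : form AP) : In g (dplus h) -> In f (dplus g) -> In f (dplus h).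
Proof.
elim: h => [b p | | | a IHa b IHb | a IHa b IHb | a IHa | a IHa b IHb | a IHa b IHb] /=;
  rewrite ?In_cat; try (by case=> [<- | []]).
- by case=> [/IHa | /IHb]; tauto.
- by case=> [/IHa | /IHb]; tauto.
- by case=> [<- | /IHa]; tauto.
- by case=> [<- /= | [/IHa | /IHb]]; rewrite ?In_cat; tauto.
- by case=> [<- /= | [/IHa | /IHb]]; rewrite ?In_cat; tauto.
Qed.

Lemma simp_conj_dplus (q : form AP) c f : In c (simp q) -> In f c -> In f (dplus q).
Proof.
elim: q c => [b p | | | a IHa b IHb | a IHa b IHb | a _ | a _ b _ | a _ b _] c /=;
  try by case=> [<- | []] [<- | []]; left.
- by case=> [<- | []].
- case/In_allpairs=> c1 [c2 [/IHa H1 [/IHb H2 <-]]] /In_cat.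
  by rewrite In_cat; case=> [/H1 | /H2]; tauto.
- by rewrite !In_cat => [[/IHa H | /IHb H] /H]; tauto.
Qed.

Lemma LF_conj_dplus (q : form AP) m c f : In (m, c) (LF q) -> In f c -> In f (dplus q).
Proof.
elim: q m c => [b p | | | a IHa b IHb | a IHa b IHb | a _ | a IHa b IHb | a IHa b IHb]
  m c /=.
- by case=> [[_ <-] | []].
- by case=> [[_ <-] | []].
- by [].
- case/In_lfprod=> m1 [c1 [m2 [c2 [/IHa H1 [/IHb H2 [_ [_ ->]]]]]]].
  by rewrite !In_cat => [[/H1 | /H2]]; tauto.
- by rewrite !In_cat => [[/IHa H | /IHb H] /H]; tauto.
- by case/In_map=> d [Hd [_ <-]] /(simp_conj_dplus Hd); right.
- rewrite !In_cat => [[/IHb H /H | /In_map [[m1 c1] [/IHa H [_ <-]]]]]; first tauto.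
  by case/In_cat => [/H | [<- | []]]; tauto.
- rewrite !In_cat => [[| /In_map [[m2 c2] [/IHb H [_ <-]]]]].
    case/In_lfprod=> m1 [c1 [m2 [c2 [/IHa H1 [/IHb H2 [_ [_ ->]]]]]]].
    by rewrite In_cat => [[/H1 | /H2]]; tauto.
  by case/In_cat => [/H | [<- | []]]; tauto.
Qed.

Lemma LF_conj_size (q : form AP) m c f : In (m, c) (LF q) -> In f c ->
  fsize f < fsize q \/ f = q /\ isUR q.
Proof.
move=> Hmc Hf; have := LF_conj_dplus Hmc Hf.
case: q Hmc => [b p | | | a b | a b | a | a b | a b] /=.
- by case=> [[_ Ec] | []]; rewrite -Ec in Hf.
- by case=> [[_ Ec] | []]; rewrite -Ec in Hf.
- by [].
- by move=> _ /In_cat [] /dplus_size; lia.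
- by move=> _ /In_cat [] /dplus_size; lia.
- case/In_map=> d [Hd [_ Ec]]; subst c; case=> [Ef | /dplus_size]; last lia.
  by move: (dplus_size (simp_conj_dplus Hd Hf)); rewrite -Ef /=; lia.
- by move=> _ [-> | /In_cat [] /dplus_size]; [right | lia | lia].
- by move=> _ [-> | /In_cat [] /dplus_size]; [right | lia | lia].
Qed.

Lemma In_pderiv (Sigma : Type) (I : Sigma -> AP -> bool) x q c :
  In c (pderiv I x q) <-> exists m, In (m, c) (LF q) /\ msat I x m.
Proof.
rewrite /pderiv In_map; split.
- by case=> [[m c'] [/In_filter [? ?] /= <-]]; exists m.
- by case=> m [? ?]; exists (m, c); split => //; apply/In_filter.
Qed.
End Syntax.

Section Soundness.
Variables (AP : eqType) (Sigma : Type) (I : Sigma -> AP -> bool).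
Variables (phi : form AP) (sigma : nat -> Sigma).
Variables (L : nat -> form AP -> Prop) (E : nat -> form AP -> form AP -> Prop).
Hypothesis run : is_run (autLTL I phi) sigma L E.
Hypothesis accepting : buchi_accepting (autLTL I phi) E.
Notation sat := (sat I sigma).

Lemma run_factor i q : L i q ->
  exists m c, In (m, c) (LF q) /\ msat I (sigma i) m /\ forall f, In f c -> E i q f.
Proof.
move=> /(run_trans run) [c [/In_pderiv [m [? ?]] Ec]].
by exists m, c; do 2!split => //; move=> f /Ec.
Qed.

Definition sound_below n := forall f j, fsize f < n -> L j f -> sat j f.

Lemma run_sat_factor n j q g m c : sound_below n -> fsize g < n ->
  In (m, c) (LF g) -> msat I (sigma j) m -> (forall f, In f c -> E j q f) -> sat j g.
Proof.
move=> sound small Hmc Hm Ec; apply/sem_LF; exists m, c; do 2!split => //.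
move=> f Hf; have [_ Lf] := run_edge run (Ec _ Hf); apply: sound Lf.
by have := dplus_size (LF_conj_dplus Hmc Hf); lia.
Qed.

Lemma run_sound_until a b i : sound_below (fsize (Until a b)) ->
  L i (Until a b) -> sat i (Until a b).
Proof.
set U := Until a b => sound Li.
have small_a : fsize a < fsize U by rewrite /=; lia.
have small_b : fsize b < fsize U by rewrite /=; lia.
have step j : L j U -> sat j b \/ sat j a /\ E j U U.
  case/run_factor=> m [c [/In_cat [Hmc | /In_map [[m1 c1] [Hmc [<- <-]]]] [Hm Ec]]].
  - by left; apply: (run_sat_factor sound small_b Hmc Hm Ec).
  - right; split; last by apply: Ec; apply/In_cat; right; left.
    apply: (run_sat_factor sound small_a Hmc Hm) => f Hf.
    by apply: Ec; apply/In_cat; left.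
have chain j : L j U -> ~ sat j b -> sat j a /\ L j.+1 U.
  by move=> Lj nbj; case: (step _ Lj) => // [[aj /(run_edge run) [_ ?]]].
case: (until_or_forever chain Li) => [// | stuck].
have loop k : E (i + k) U U.
  by case: (stuck k) => Lk nbk; case: (step _ Lk) => [/nbk | []].
by case: (accepting loop 0) => k [_ [| [a' [b' [? _]]]]].
Qed.

Lemma run_sound_release a b i : sound_below (fsize (Release a b)) ->
  L i (Release a b) -> sat i (Release a b).
Proof.
set R := Release a b => sound Li.
have small_a : fsize a < fsize R by rewrite /=; lia.
have small_b : fsize b < fsize R by rewrite /=; lia.
suff step j : L j R -> sat j b /\ (sat j a \/ L j.+1 R) by exact: release_coind step Li.
case/run_factor=> m [c [/In_cat [Hprod | /In_map [[m2 c2] [Hmc [<- <-]]]] [Hm Ec]]].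
- case/In_lfprod: Hprod Hm Ec => m1 [c1 [m2 [c2 [Hmc1 [Hmc2 [_ [-> ->]]]]]]].
  rewrite msat_mmeet => /andP [Hm1 Hm2].
  split; [apply: (run_sat_factor sound small_b Hmc2 Hm2)
         | left; apply: (run_sat_factor sound small_a Hmc1 Hm1)];
    by move=> f Hf; apply: Ec; apply/In_cat; tauto.
- split; last by right; apply: (proj2 (run_edge run (Ec _ _))); apply/In_cat; right; left.
  by apply: (run_sat_factor sound small_b Hmc Hm) => f Hf; apply: Ec; apply/In_cat; left.
Qed.

Lemma run_sound_other q i : ~~ isUR q -> sound_below (fsize q) -> L i q -> sat i q.
Proof.
move=> notUR sound /run_factor [m [c [Hmc [Hm Ec]]]].
apply/sem_LF; exists m, c; do 2!split => //.
move=> f Hf; have [_ Lf] := run_edge run (Ec _ Hf); apply: sound Lf.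
by case: (LF_conj_size Hmc Hf) => // [[_]]; rewrite (negbTE notUR).
Qed.

Lemma run_sound i q : L i q -> sat i q.
Proof.
have [n] := ubnP (fsize q); elim: n => // n IH in i q *; rewrite ltnS => size_q.
have sound : sound_below (fsize q) by move=> f j ?; apply: IH; lia.
case: q sound {size_q} => [b p | | | a b | a b | a | a b | a b] sound;
  by [apply: run_sound_until | apply: run_sound_release | apply: run_sound_other].
Qed.
End Soundness.

Lemma eventually_constant (T : Type) (mu : T -> nat) (p : nat -> T) :
  (forall k, p k.+1 = p k \/ mu (p k.+1) < mu (p k)) ->
  exists k0, forall j, p (k0 + j) = p k0.
Proof.
move=> step.
have descend k j : p (k + j) = p k \/ mu (p (k + j)) < mu (p k).
  elim: j => [| j IH]; first by rewrite addn0; left.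
  rewrite addnS; case: (step (k + j)) => [-> // | lt]; right.
  by case: IH => [<- | ?] //; lia.
suff: forall n k, mu (p k) < n -> exists k0, forall j, p (k0 + j) = p k0.
  by move=> /(_ _ 0 (ltnSn _)).
elim=> // n IH k small.
case: (classic (forall j, p (k + j) = p k)) => [? | /not_all_ex_not [j neq]].
  by exists k.
by case: (descend k j) => // lt; apply: (IH (k + j)); lia.
Qed.

Section Completeness.
Variables (AP : eqType) (Sigma : Type) (I : Sigma -> AP -> bool).
Variables (phi : form AP) (sigma : nat -> Sigma).
Hypothesis phi0 : sat I sigma 0 phi.
Notation sat := (sat I sigma).
Notation satc := (satc I sigma).

(* Resolving [a U b] through [LF b] as soon as [b] holds is what prevents a path
   from looping on [a U b] forever. *)
Definition good_factor i q (c : fconj AP) :=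
  [/\ In c (pderiv I (sigma i) q), satc i.+1 c &
      forall a b, q = Until a b -> sat i b -> In c (pderiv I (sigma i) b)].

Lemma good_factor_exists i q : sat i q -> exists c, good_factor i q c.
Proof.
move=> qi; case: (classic (exists a b, q = Until a b /\ sat i b)).
  case=> a [b [-> bi]]; case/sem_LF: bi => m [c [Hmc [Hm Hc]]].
  have Hb : In c (pderiv I (sigma i) b) by apply/In_pderiv; exists m.
  exists c; split => // [| _ _ [_ <-] //].
  by apply/In_pderiv; exists m; split => //; apply/In_cat; left.
move=> noU; case/sem_LF: qi => m [c [Hmc [Hm Hc]]].
exists c; split => // [| a b Eq bi]; first by apply/In_pderiv; exists m.
by case: noU; exists a, b.
Qed.

Definition init_conj : fconj AP :=
  epsilon (inhabits [::]) (fun c => In c (simp phi) /\ satc 0 c).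

Definition next_conj i q : fconj AP := epsilon (inhabits [::]) (good_factor i q).

Fixpoint level i : form AP -> Prop :=
  match i with
  | 0 => fun q => In q init_conj
  | j.+1 => fun q' => exists q, level j q /\ In q' (next_conj j q)
  end.

Definition edge i q q' := level i q /\ In q' (next_conj i q).

Lemma init_conj_spec : In init_conj (simp phi) /\ satc 0 init_conj.
Proof. exact: epsilon_spec (iffLR (sem_simp _ _ _ _) phi0). Qed.

Lemma next_conj_spec i q : sat i q -> good_factor i q (next_conj i q).
Proof. by move=> /good_factor_exists; exact: epsilon_spec. Qed.

Lemma level_sat i q : level i q -> sat i q /\ In q (dplus phi).
Proof.
elim: i q => [| i IH] q /=.
  by case: init_conj_spec => Hc Sc Hq; split; [exact: Sc | exact: simp_conj_dplus Hc Hq].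
case=> q0 [/IH [q0i q0phi] Hq].
have [/In_pderiv [m [Hmc _]] Sc _] := next_conj_spec q0i.
by split; [exact: Sc | exact: dplus_trans q0phi (LF_conj_dplus Hmc Hq)].
Qed.

Lemma level_run : is_run (autLTL I phi) sigma level edge.
Proof.
split.
- by move=> i q /level_sat [].
- by exists init_conj; split; [case: init_conj_spec | move=> q].
- by move=> i q' [q [? ?]]; exists q.
- by move=> i q q' [? ?]; split => //; exists q.
- move=> i q Lq; exists (next_conj i q); split.
    by case: (next_conj_spec (level_sat Lq).1).
  by move=> q'; split; [case | split].
Qed.

Lemma edge_descends i q q' : edge i q q' -> fsize q' < fsize q \/ q' = q /\ isUR q.
Proof.
case=> Lq Hq'; have [/In_pderiv [m [Hmc _]] _ _] := next_conj_spec (level_sat Lq).1.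
exact: LF_conj_size Hmc Hq'.
Qed.

Lemma no_until_loop a b i : ~ forall k, edge (i + k) (Until a b) (Until a b).
Proof.
move=> loop; have [Li _] := loop 0; rewrite addn0 in Li.
case: (level_sat Li) => [[k [ik [bk _]]] _].
have [Lk Uk] := loop (k - i); rewrite subnKC // in Lk Uk.
have [_ _ fulfil] := next_conj_spec (level_sat Lk).1.
have /In_pderiv [m [Hmc _]] := fulfil a b erefl bk.
by have := dplus_size (LF_conj_dplus Hmc Uk) => /=; lia.
Qed.

Lemma level_accepting : buchi_accepting (autLTL I phi) edge.
Proof.
move=> i0 p path n.
have step k : p k.+1 = p k \/ fsize (p k.+1) < fsize (p k).
  by case: (edge_descends (path k)) => [| [-> _]]; [right | left].
have [k0 const] := eventually_constant step.
have [q Eq] : exists q, p k0 = q by eexists.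
have loop j : edge (i0 + k0 + j) q q.
  by have := path (k0 + j); rewrite -addnS !const Eq addnA.
exists (k0 + n); split; first lia.
rewrite const Eq; have [Lq _] := loop 0; have [_ Dq] := level_sat Lq.
case: (edge_descends (loop 0)) => [| [_]]; first lia.
case: q Dq loop {Eq Lq} => // a b Dq loop _; last by right; exists a, b.
by case: (no_until_loop loop).
Qed.

Lemma sat_accepts : accepts (autLTL I phi) sigma.
Proof. by exists level, edge; split; [exact: level_run | exact: level_accepting]. Qed.
End Completeness.

Theorem theorem3 (AP : eqType) (Sigma : Type) (I : Sigma -> AP -> bool)
  (phi : form AP) :
  forall sigma : nat -> Sigma,
    sat I sigma 0 phi <-> accepts (autLTL I phi) sigma.
Proof.
move=> sigma; split; first exact: sat_accepts.
case=> L [E [run accepting]]; have [c [Hc Lc]] := run_init run.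
by apply/sem_simp; exists c; split => // f /Lc /(run_sound run accepting).
Qed.
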